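(* A function $SO:[0,1]^2\to[0,1]$ is a semi-overlap function if and only if there exist two functions $f,g:[0,1]^2\to[0,1]$ such that $$SO(u,v)=\frac{f(u,v)}{f(u,v)+g(u,v)}\quad\text{for all }u,v\in[0,1],$$ and the following conditions hold: (1) $f(u,v)+g(u,v)\neq 0$ for all $u,v\in[0,1]$; (2) $f$ and $g$ are commutative, i.e. $f(u,v)=f(v,u)$ and $g(u,v)=g(v,u)$; (3) if $uv=0$, then $f(u,v)=0$; (4) if $uv=1$, then $g(u,v)=0$; (5) $f$ is increasing and $g$ is decreasing (in each variable); (6) $f$ is left-continuous and $f+g$ is right-continuous.
   Context: A binary function $h$ on $[0,1]^2$ is called left-continuous if for every $u\in[0,1]$ and every nonempty family $\{v_i\mid i\in I\}\subseteq[0,1]$ one has $h(u,\sup_{i\in I} v_i)=\sup_{i\in I} h(u,v_i)$; right-continuity is the analogous notion with limits from the right (infima). A semi-overlap function is a function $SO:[0,1]^2\to[0,1]$ such that for all $u,v\in[0,1]$: (S1) $SO(u,v)=SO(v,u)$; (S2) if $uv=0$ then $SO(u,v)=0$; (S3) if $uv=1$ then $SO(u,v)=1$; (S4) $SO$ is increasing in each variable; (S5) $SO$ is left-continuous. *)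

From HB Require Import structures.
From mathcomp Require Import all_boot all_order all_algebra.
From mathcomp Require Import all_classical all_reals.
Set Implicit Arguments. Unset Strict Implicit. Unset Printing Implicit Defensive.
Import Order.TTheory GRing.Theory Num.Theory.
Local Open Scope classical_set_scope.
Local Open Scope ring_scope.

(* Binary functions on [0,1]^2 are represented as total functions R -> R -> R;
   only their values on [0,1]^2 matter. *)

Definition I01 {R : realType} (x : R) : Prop := 0 <= x <= 1.

Definition into_unit {R : realType} (h : R -> R -> R) : Prop :=
  forall u v, I01 u -> I01 v -> I01 (h u v).

Definition commutative2 {R : realType} (h : R -> R -> R) : Prop :=
  forall u v, I01 u -> I01 v -> h u v = h v u.

Definition increasing2 {R : realType} (h : R -> R -> R) : Prop :=
  (forall u1 u2 v, I01 u1 -> I01 u2 -> I01 v -> u1 <= u2 -> h u1 v <= h u2 v) /\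
  (forall u v1 v2, I01 u -> I01 v1 -> I01 v2 -> v1 <= v2 -> h u v1 <= h u v2).

Definition decreasing2 {R : realType} (h : R -> R -> R) : Prop :=
  (forall u1 u2 v, I01 u1 -> I01 u2 -> I01 v -> u1 <= u2 -> h u2 v <= h u1 v) /\
  (forall u v1 v2, I01 u -> I01 v1 -> I01 v2 -> v1 <= v2 -> h u v2 <= h u v1).

Definition left_continuous2 {R : realType} (h : R -> R -> R) : Prop :=
  forall u, I01 u -> forall V : set R, V !=set0 -> V `<=` [set x | I01 x] ->
    h u (sup V) = sup [set h u v | v in V].

Definition right_continuous2 {R : realType} (h : R -> R -> R) : Prop :=
  forall u, I01 u -> forall V : set R, V !=set0 -> V `<=` [set x | I01 x] ->
    h u (inf V) = inf [set h u v | v in V].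

Definition semi_overlap {R : realType} (SO : R -> R -> R) : Prop :=
  into_unit SO /\
  commutative2 SO /\
  (forall u v, I01 u -> I01 v -> u * v = 0 -> SO u v = 0) /\
  (forall u v, I01 u -> I01 v -> u * v = 1 -> SO u v = 1) /\
  increasing2 SO /\
  left_continuous2 SO.

From HB Require Import structures.
From mathcomp Require Import all_boot all_order all_algebra.
From mathcomp Require Import all_classical all_reals.
From mathcomp Require Import lra.
Import Order.TTheory GRing.Theory Num.Theory.
Local Open Scope ring_scope.

(* Forwards, f := SO and g := 1 - SO, so that f + g is the constant 1.
   Backwards, bounds, symmetry, boundary conditions and monotonicity pass
   directly to the quotient f / (f + g); the real point is left-continuity.
   Since f + g is nonnegative and right-continuous, it is increasing: its
   value at a is its infimum over [a, b].  Hence for v in V,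
   f(u,v) / (f+g)(u, sup V) <= f(u,v) / (f+g)(u,v) = SO(u,v), and taking
   the supremum over v with the left-continuity of f gives
   SO(u, sup V) <= sup_v SO(u,v); the converse inequality is monotonicity. *)

Definition quotient_representation {R : realType} (SO f g : R -> R -> R) :=
  into_unit f /\ into_unit g /\
  (forall u v, I01 u -> I01 v -> SO u v = f u v / (f u v + g u v)) /\
  (forall u v, I01 u -> I01 v -> f u v + g u v != 0) /\
  (commutative2 f /\ commutative2 g) /\
  (forall u v, I01 u -> I01 v -> u * v = 0 -> f u v = 0) /\
  (forall u v, I01 u -> I01 v -> u * v = 1 -> g u v = 0) /\
  (increasing2 f /\ decreasing2 g) /\
  (left_continuous2 f /\ right_continuous2 (fun u v => f u v + g u v)).

Lemma semi_overlap_quotient_representation (R : realType) (SO : R -> R -> R) :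
  semi_overlap SO -> quotient_representation SO SO (fun u v => 1 - SO u v).
Proof.
move=> [SO_unit [SO_comm [SO_0 [SO_1 [[SO_incr1 SO_incr2] SO_lc]]]]].
have addrsubK (x : R) : x + (1 - x) = 1 by lra.
split=> //; split.
  by move=> u v hu hv; have /andP[? ?] := SO_unit u v hu hv; apply/andP; lra.
split; first by move=> u v _ _; rewrite addrsubK divr1.
split; first by move=> u v _ _; rewrite addrsubK oner_neq0.
split; first by split=> // u v hu hv; rewrite SO_comm.
split=> //; split; first by move=> u v hu hv huv; rewrite SO_1 // subrr.
split.
  split=> //; split.
    by move=> u1 u2 v hu1 hu2 hv le_u; have := SO_incr1 u1 u2 v hu1 hu2 hv le_u; lra.
  by move=> u v1 v2 hu hv1 hv2 le_v; have := SO_incr2 u v1 v2 hu hv1 hv2 le_v; lra.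
split=> // u hu V [v0 Vv0] _ /=.
have -> : [set SO u v + (1 - SO u v) | v in V]%classic = [set 1]%classic.
  apply/seteqP; split=> x /=; first by move=> [v _ <-]; rewrite addrsubK.
  by move=> ->; exists v0 => //; rewrite addrsubK.
by rewrite addrsubK inf1.
Qed.

Lemma ler_ratio {R : realType} (a b c d : R) :
  0 <= a -> a <= c -> 0 <= d -> d <= b -> 0 < a + b -> 0 < c + d ->
  a / (a + b) <= c / (c + d).
Proof.
move=> a_ge0 le_ac d_ge0 le_db ab_gt0 cd_gt0.
rewrite ler_pdivrMr // mulrAC ler_pdivlMr //; nra.
Qed.

Lemma sup_I01 {R : realType} (V : set R) :
  (V !=set0)%classic -> (V `<=` [set x | I01 x])%classic -> I01 (sup V).
Proof.
move=> [v0 Vv0] V_I01.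
have V_ub : has_ubound V by exists 1 => x /V_I01 /andP[].
apply/andP; split.
  by have /andP[v0_ge0 _] := V_I01 _ Vv0; apply: le_trans v0_ge0 (ub_le_sup V_ub Vv0).
by apply: ge_sup; [exists v0 | move=> x /V_I01 /andP[]].
Qed.

Lemma right_continuous2_increasing {R : realType} (h : R -> R -> R) :
  (forall u v, I01 u -> I01 v -> 0 <= h u v) -> right_continuous2 h ->
  forall u a b, I01 u -> I01 a -> I01 b -> a <= b -> h u a <= h u b.
Proof.
move=> h_ge0 h_rc u a b hu /andP[a_ge0 a_le1] /andP[b_ge0 b_le1] le_ab.
pose W := [set x | a <= x <= b]%classic.
have Wa : W a by rewrite /W /= lexx le_ab.
have Wb : W b by rewrite /W /= lexx le_ab.
have W_I01 : (W `<=` [set x | I01 x])%classic.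
  by move=> x /andP[? ?]; apply/andP; lra.
have infW : inf W = a.
  apply/eqP; rewrite eq_le; apply/andP; split.
    by apply: ge_inf => //; exists a => x /andP[].
  by apply: lb_le_inf; [exists a | move=> x /andP[]].
rewrite -{1}infW h_rc //; last by exists a.
apply: ge_inf; last by exists b.
by exists 0 => _ [x /W_I01 Ix <-]; apply: h_ge0.
Qed.

Section QuotientSemiOverlap.
Variables (R : realType) (SO f g : R -> R -> R).
Hypothesis f_unit : into_unit f.
Hypothesis g_unit : into_unit g.
Hypothesis SO_def : forall u v, I01 u -> I01 v -> SO u v = f u v / (f u v + g u v).
Hypothesis fg_neq0 : forall u v, I01 u -> I01 v -> f u v + g u v != 0.

Let f_ge0 u v : I01 u -> I01 v -> 0 <= f u v.
Proof. by move=> hu hv; have /andP[] := f_unit u v hu hv. Qed.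

Let g_ge0 u v : I01 u -> I01 v -> 0 <= g u v.
Proof. by move=> hu hv; have /andP[] := g_unit u v hu hv. Qed.

Let fg_gt0 u v : I01 u -> I01 v -> 0 < f u v + g u v.
Proof.
move=> hu hv; rewrite lt_def fg_neq0 //=.
by rewrite addr_ge0 ?f_ge0 ?g_ge0.
Qed.

Lemma quotient_into_unit : into_unit SO.
Proof.
move=> u v hu hv; rewrite SO_def //; apply/andP; split.
  by rewrite divr_ge0 ?f_ge0 // ltW ?fg_gt0.
by rewrite ler_pdivrMr ?fg_gt0 // mul1r lerDl g_ge0.
Qed.

Lemma quotient_commutative : commutative2 f -> commutative2 g -> commutative2 SO.
Proof. by move=> f_comm g_comm u v hu hv; rewrite !SO_def // f_comm // g_comm. Qed.

Lemma quotient_increasing : increasing2 f -> decreasing2 g -> increasing2 SO.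
Proof.
move=> [f_incr1 f_incr2] [g_decr1 g_decr2]; split.
  move=> u1 u2 v hu1 hu2 hv le_u; rewrite !SO_def //.
  by apply: ler_ratio; rewrite ?f_ge0 ?g_ge0 ?fg_gt0 ?f_incr1 ?g_decr1.
move=> u v1 v2 hu hv1 hv2 le_v; rewrite !SO_def //.
by apply: ler_ratio; rewrite ?f_ge0 ?g_ge0 ?fg_gt0 ?f_incr2 ?g_decr2.
Qed.

Lemma quotient_left_continuous :
  increasing2 f -> decreasing2 g -> left_continuous2 f ->
  right_continuous2 (fun u v => f u v + g u v) -> left_continuous2 SO.
Proof.
move=> f_incr g_decr f_lc fg_rc u hu V V0 V_I01.
have [_ SO_incr2] := quotient_increasing f_incr g_decr.
have supV_I01 : I01 (sup V) by apply: sup_I01.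
have V_ub : has_ubound V by exists 1 => x /V_I01 /andP[].
set E := [set SO u v | v in V]%classic.
have E_ub : has_sup E.
  split; first by case: V0 => v Vv; exists (SO u v), v.
  by exists 1 => _ [v /V_I01 Iv <-]; have /andP[] := quotient_into_unit u v hu Iv.
have fg_incr := right_continuous2_increasing _
  (fun u v hu hv => ltW (fg_gt0 u v hu hv)) fg_rc.
apply/eqP; rewrite eq_le; apply/andP; split; last first.
  apply: ge_sup => //; first by case: E_ub.
  move=> _ [v Vv <-]; apply: SO_incr2 => //; [exact: V_I01 | exact: ub_le_sup].
rewrite SO_def // ler_pdivrMr ?fg_gt0 // {1}f_lc //.
apply: ge_sup; first by case: V0 => v Vv; exists (f u v), v.
move=> _ [v Vv <-]; have Iv := V_I01 v Vv.
rewrite -ler_pdivrMr ?fg_gt0 //.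
have SO_le_supE : SO u v <= sup E by apply: sup_upper_bound => //; exists v.
apply: le_trans SO_le_supE; rewrite SO_def //.
apply: ler_wpM2l; first exact: f_ge0.
rewrite lef_pV2 ?posrE ?fg_gt0 //.
by apply: fg_incr => //; exact: ub_le_sup.
Qed.

End QuotientSemiOverlap.

Lemma quotient_representation_semi_overlap (R : realType) (SO f g : R -> R -> R) :
  quotient_representation SO f g -> semi_overlap SO.
Proof.
move=> [f_unit [g_unit [SO_def [fg_neq0 [[f_comm g_comm]
  [f_0 [g_1 [[f_incr g_decr] [f_lc fg_rc]]]]]]]]].
split; first exact: quotient_into_unit f_unit g_unit SO_def fg_neq0.
split; first exact: quotient_commutative SO_def f_comm g_comm.
split; first by move=> u v hu hv uv0; rewrite SO_def // f_0 // mul0r.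
split.
  move=> u v hu hv uv1; rewrite SO_def // g_1 // addr0 divff //.
  by have := fg_neq0 u v hu hv; rewrite g_1 // addr0.
split; first exact: quotient_increasing f_unit g_unit SO_def fg_neq0 f_incr g_decr.
exact: quotient_left_continuous f_unit g_unit SO_def fg_neq0 f_incr g_decr f_lc fg_rc.
Qed.

Theorem theorem3p6 (R : realType) (SO : R -> R -> R) :
  semi_overlap SO <->
  exists f g : R -> R -> R,
    into_unit f /\ into_unit g /\
    (forall u v, I01 u -> I01 v -> SO u v = f u v / (f u v + g u v)) /\
    (forall u v, I01 u -> I01 v -> f u v + g u v != 0) /\
    (commutative2 f /\ commutative2 g) /\
    (forall u v, I01 u -> I01 v -> u * v = 0 -> f u v = 0) /\
    (forall u v, I01 u -> I01 v -> u * v = 1 -> g u v = 0) /\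
    (increasing2 f /\ decreasing2 g) /\
    (left_continuous2 f /\ right_continuous2 (fun u v => f u v + g u v)).
Proof.
split=> [SO_so | [f [g fg_repr]]].
  by exists SO, (fun u v => 1 - SO u v); apply: semi_overlap_quotient_representation.
exact: quotient_representation_semi_overlap fg_repr.
Qed.
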